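(* Let $q\ge5$ be a prime power and let $\mathcal{C}_\mathscr{C}$ be the $[q+1,q-3,5]_q$ code with parity check matrix whose columns are the vectors $(1,t,t^2,t^3)$, $t\in\mathbb{F}_q$, and $(0,0,0,1)$. The full weight distribution $(B_w(\mathcal{V}))_{0\le w\le q+1}$ of any coset $\mathcal{V}$ of $\mathcal{C}_\mathscr{C}$ is uniquely determined by the weight of $\mathcal{V}$ together with the number $B_3(\mathcal{V})$ of its weight-$3$ vectors; in particular, two cosets of the same weight with the same value of $B_3$ have identical weight distributions.
   Context: A coset of a linear code $\mathcal{C}\subseteq\mathbb{F}_q^n$ is a set $\mathbf{v}+\mathcal{C}$, $\mathbf{v}\in\mathbb{F}_q^n$; its weight is the minimum Hamming weight of its vectors; $B_w(\mathcal{V})$ denotes the number of vectors of Hamming weight $w$ in the coset $\mathcal{V}$. The cosets of $\mathcal{C}_\mathscr{C}$ have weight at most $3$. *)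

From HB Require Import structures.
From mathcomp Require Import all_boot all_order all_algebra.
Set Implicit Arguments. Unset Strict Implicit. Unset Printing Implicit Defensive.
Import GRing.Theory.
Local Open Scope ring_scope.

Section Code.
Variable F : finFieldType.

(* Coordinates of F_q^(q+1) are indexed by option F:
   Some t  <-> column (1,t,t^2,t^3),   None <-> column (0,0,0,1). *)
Definition word := {ffun option F -> F}.

Definition pcol (i : option F) : 'rV[F]_4 :=
  match i with
  | Some t => \row_(j < 4) t ^+ j
  | None => \row_(j < 4) (if val j == 3%N then 1 else 0)
  end.

Definition syndrome (x : word) : 'rV[F]_4 := \sum_i x i *: pcol i.

Definition CC : {set word} := [set x : word | syndrome x == 0].

Definition hwt (x : word) : nat := #|[set i | x i != 0]|.

Definition coset (v : word) : {set word} := [set v + c | c in CC].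

Definition coset_weight (V : {set word}) : nat :=
  \big[minn/#|{: option F}|]_(x in V) hwt x.

Definition B (w : nat) (V : {set word}) : nat := #|[set x in V | hwt x == w]|.

End Code.

(* The code is MDS of minimum distance 5: any four columns of the parity
   check matrix are independent, because for four of the points some
   polynomial of degree at most 3 vanishes at three of them but not at the
   fourth (the point at infinity reading off the cubic coefficient).  Hence a
   coset has at most one vector of weight at most 2, so B_0, B_1, B_2 are fixed
   by the coset weight.  Moreover, for a set T of at least four coordinates,
   some vector supported in T has any prescribed syndrome, and translating by
   it shows that the number of coset vectors supported in T is the same for
   all cosets.  Summing over the w-sets T gives
   sum_(j < w) C(q + 1 - j, w - j) B_j + B_w, a triangular system which
   determines every B_w with w >= 4 from B_0, ..., B_3. *)

From mathcomp Require Import all_boot all_order all_algebra.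
Set Implicit Arguments. Unset Strict Implicit. Unset Printing Implicit Defensive.
Import GRing.Theory Order.TTheory.
Local Open Scope ring_scope.

Lemma double_count (I J : finType) (P : pred I) (Q : pred J) (R : I -> J -> bool) :
  (\sum_(j | Q j) #|[set i | P i && R i j]| =
   \sum_(i | P i) #|[set j | Q j && R i j]|)%N.
Proof.
under eq_bigr do rewrite -sum1dep_card.
under [RHS]eq_bigr do rewrite -sum1dep_card.
rewrite (exchange_big_dep Q) => [|i j _ /andP[] //].
by apply: eq_bigr => j Qj; apply: eq_bigl => i; rewrite Qj.
Qed.

Lemma card_supersets (I : finType) (S : {set I}) t :
  #|[set T : {set I} | (#|T| == t) && (S \subset T)]| =
  if (#|S| <= t)%N then 'C(#|I| - #|S|, t - #|S|) else 0%N.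
Proof.
case: leqP => [leSt|ltSt]; last first.
  apply/eqP; rewrite cards_eq0; apply/eqP/setP => T; rewrite !inE.
  apply/negbTE/andP => -[/eqP cT /subset_leq_card]; by rewrite cT leqNgt ltSt.
have cardSC : #|~: S| = (#|I| - #|S|)%N by rewrite cardsCs setCK.
rewrite -cardSC -cards_draws.
pose D := [set U : {set I} | (U \subset ~: S) & #|U| == (t - #|S|)%N].
have U_disj U : U \in D -> [disjoint U & S].
  by rewrite inE => /andP[sUSC _]; rewrite disjoints_subset.
have -> : [set T : {set I} | (#|T| == t) && (S \subset T)] = [set U :|: S | U in D].
  apply/setP => T; rewrite inE; apply/andP/imsetP => [[/eqP cT sST]|[U DU ->]].
    exists (T :\: S); last first.
      apply/setP => i; rewrite !inE.
      by case: (boolP (i \in S)) => [/(subsetP sST) ->|_]; rewrite ?orbT ?orbF.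
    by rewrite inE subsetDr cardsD (setIidPr sST) cT eqxx.
  have := DU; rewrite inE => /andP[_ /eqP cU].
  by rewrite cardsU (disjoint_setI0 (U_disj _ DU)) cards0 subn0 cU subnK // subsetUr.
apply: card_in_imset => U1 U2 DU1 DU2 eqU.
have UE U : U \in D -> (U :|: S) :\: S = U.
  by move/U_disj/setDidPl; rewrite setDUl setDv setU0.
by rewrite -(UE U1) // eqU UE.
Qed.

Section Cosets.
Variable F : finFieldType.
Implicit Types (x y c v : word F) (S T : {set option F}) (p : {poly F}).

Definition supp x : {set option F} := [set i | x i != 0].

Lemma syndromeD x y : syndrome (x + y) = syndrome x + syndrome y.
Proof. by rewrite /syndrome -big_split; apply: eq_bigr => i _; rewrite ffunE scalerDl. Qed.

Lemma syndromeB x y : syndrome (x - y) = syndrome x - syndrome y.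
Proof. by rewrite /syndrome -sumrB; apply: eq_bigr => i _; rewrite !ffunE scalerBl. Qed.

Lemma mem_coset x v : (x \in coset v) = (syndrome x == syndrome v).
Proof.
apply/imsetP/eqP => [[c + ->]|sxv].
  by rewrite inE syndromeD => /eqP ->; rewrite addr0.
exists (x - v); last by rewrite addrC subrK.
by rewrite inE syndromeB sxv subrr.
Qed.

Lemma suppD x y : supp (x + y) \subset supp x :|: supp y.
Proof.
apply/subsetP => i; rewrite !inE ffunE; apply: contraR.
by rewrite negb_or !negbK => /andP[/eqP -> /eqP ->]; rewrite addr0.
Qed.

Lemma suppN x : supp (- x) = supp x.
Proof. by apply/setP => i; rewrite !inE ffunE oppr_eq0. Qed.

Definition dual_eval p i : F := \sum_(j < 4) p`_j * pcol i 0 j.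

Lemma dual_eval_Some p t : (size p <= 4)%N -> dual_eval p (Some t) = p.[t].
Proof.
by move=> sp; rewrite (horner_coef_wide t sp); apply: eq_bigr => j _; rewrite mxE.
Qed.

Lemma dual_eval_None p : dual_eval p None = p`_3.
Proof. by rewrite /dual_eval !big_ord_recr big_ord0 /= !mxE /= !mulr0 !add0r mulr1. Qed.

Lemma sum_dual_eval_codeword p c : syndrome c = 0 -> \sum_i c i * dual_eval p i = 0.
Proof.
move=> sc0; under eq_bigr do rewrite mulr_sumr.
rewrite exchange_big big1 //= => j _.
transitivity (p`_j * syndrome c 0 j); last by rewrite sc0 mxE mulr0.
by rewrite /syndrome summxE mulr_sumr; apply: eq_bigr => i _; rewrite mxE mulrCA.
Qed.

Lemma card_Some_preim S : #|S| = (#|[set t | Some t \in S]| + (None \in S))%N.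
Proof.
rewrite (cardsD1 None S) addnC; congr (_ + _).
rewrite -[RHS](card_imset _ Some_inj); apply: eq_card => -[t|]; rewrite !inE /=.
  by rewrite (mem_imset _ _ Some_inj) inE.
by apply/esym/negP => /imsetP[].
Qed.

Lemma separating_poly S i0 : i0 \in S -> (#|S| <= 4)%N ->
  exists2 p, dual_eval p i0 != 0 & {in S :\ i0, forall i, dual_eval p i = 0}.
Proof.
move=> Si0 cardS.
pose Z := [set t | Some t \in S :\ i0].
pose q := \prod_(t <- enum Z) ('X - t%:P).
have size_q : size q = #|Z|.+1 by rewrite size_prod_XsubC cardE.
have root_q t : root q t = (Some t \in S :\ i0) by rewrite root_prod_XsubC mem_enum inE.
have cardZ : (#|Z| + (None \in S :\ i0) <= 3)%N.
  by move: cardS; rewrite (cardsD1 i0) Si0 add1n ltnS card_Some_preim.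
case: i0 Si0 @Z @q size_q root_q cardZ => [t0|] _ Z q size_q root_q cardZ.
- have size_q4 : (size q <= 4)%N by rewrite size_q ltnS (leq_trans (leq_addr _ _) cardZ).
  exists q => [|[t|] Si]; rewrite ?dual_eval_Some ?dual_eval_None //.
  + by rewrite -rootE root_q !inE eqxx.
  + by apply/eqP; rewrite -rootE root_q.
  + by rewrite nth_default // size_q; rewrite Si addn1 in cardZ.
(* at infinity, pad [q] by a power of [X] so that its cubic coefficient is its leading one *)
- have q_neq0 : q != 0 by rewrite -size_poly_eq0 size_q.
  have leZ3 : (#|Z| <= 3)%N by rewrite !inE eqxx addn0 in cardZ.
  exists (q * 'X^(3 - #|Z|)) => [|[t|] Si]; last by rewrite !inE eqxx in Si.
  + rewrite dual_eval_None coefMXn ltnNge leq_subr subKn //.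
    by rewrite -{1}[#|Z|]/(#|Z|.+1.-1) -size_q -lead_coefE lead_coef_prod_XsubC oner_eq0.
  + rewrite dual_eval_Some ?size_mulXn // ?size_q ?addnS ?subnK //.
    by apply/eqP; rewrite -rootE rootM root_q Si.
Qed.

Lemma codeword_small_supp_eq0 c : syndrome c = 0 -> (#|supp c| <= 4)%N -> c = 0.
Proof.
move=> sc0 card_supp; apply/ffunP => i0; rewrite ffunE; apply/eqP/contraT => ci0.
have supp_i0 : i0 \in supp c by rewrite inE.
have [p pi0 p0] := separating_poly supp_i0 card_supp.
have := sum_dual_eval_codeword p sc0; rewrite (bigD1 i0) //= big1 ?addr0 => [/eqP|i ii0].
  by rewrite mulf_eq0 (negbTE ci0) (negbTE pi0).
have [-> | ci] := eqVneq (c i) 0; first by rewrite mul0r.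
by rewrite p0 ?mulr0 // !inE ii0.
Qed.

Lemma syndrome_inj_small_supp x y :
  syndrome x = syndrome y -> (#|supp x :|: supp y| <= 4)%N -> x = y.
Proof.
move=> sxy card_supp; apply/eqP; rewrite -subr_eq0; apply/eqP.
apply: codeword_small_supp_eq0; first by rewrite syndromeB sxy subrr.
by rewrite (leq_trans _ card_supp) // subset_leq_card // -(suppN y) suppD.
Qed.

Lemma coset_small_uniq v x y : x \in coset v -> y \in coset v ->
  (hwt x <= 2)%N -> (hwt y <= 2)%N -> x = y.
Proof.
rewrite !mem_coset => /eqP sx /eqP sy wx wy.
apply: syndrome_inj_small_supp; first by rewrite sx sy.
exact: leq_trans (leq_card_setU _ _) (leq_add wx wy).
Qed.

Lemma syndrome_onto_supp T s : (4 <= #|T|)%N ->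
  exists2 d, supp d \subset T & syndrome d = s.
Proof.
move=> cardT.
have [T4] : exists T4, T4 \in [set A : {set option F} | A \subset T & #|A| == 4%N].
  by apply/card_gt0P; rewrite cards_draws bin_gt0.
rewrite inE => /andP[sT4T /eqP cardT4].
pose W := [set x : word F | supp x \subset T4].
have cardW : #|W| = (#|F| ^ 4)%N.
  rewrite -cardT4 -(card_pffun_on 0 T4 predT); apply: eq_card => x.
  rewrite inE (@eq_subset _ (supp x) (support x)) => [|i]; last by rewrite inE.
  by apply/idP/pffun_onP => [|[]//]; split.
have inj_W : {in W &, injective (@syndrome F)}.
  move=> x y; rewrite !inE => xW yW sxy; apply: syndrome_inj_small_supp => //.
  by rewrite -cardT4 subset_leq_card // subUset xW.
have : s \in [set syndrome x | x in W].
  suff -> : [set syndrome x | x in W] = setT by [].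
  by apply/eqP; rewrite eqEcard subsetT cardsT card_in_imset // cardW card_mx mul1n leqnn.
case/imsetP => d; rewrite inE => sdT4 ->.
by exists d; first exact: subset_trans sT4T.
Qed.

Lemma card_coset_supp_le T v1 v2 : (4 <= #|T|)%N ->
  (#|[set x in coset v1 | supp x \subset T]| <= #|[set x in coset v2 | supp x \subset T]|)%N.
Proof.
move=> cardT; have [d sdT sd] := syndrome_onto_supp (syndrome v2 - syndrome v1) cardT.
rewrite -(card_imset _ (addIr d)); apply/subset_leq_card/subsetP => _ /imsetP[x + ->].
rewrite !inE !mem_coset syndromeD sd => /andP[/eqP -> sxT].
rewrite addrC subrK eqxx (subset_trans (suppD x d)) //.
by rewrite subUset sxT.
Qed.

Lemma coset_weight_le v x : x \in coset v -> (coset_weight (coset v) <= hwt x)%N.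
Proof. by rewrite /coset_weight -minEnat -leEnat; apply: bigmin_le_cond. Qed.

Lemma coset_weight_attained v : exists2 x, x \in coset v & hwt x = coset_weight (coset v).
Proof.
have v_in : v \in coset v by rewrite mem_coset.
rewrite /coset_weight -minEnat.
have [x x_in ->] := eq_bigmin _ _ (@hwt F) v_in (fun x _ => max_card (supp x)).
by exists x.
Qed.

Lemma B_small v j : (j <= 2)%N -> B j (coset v) = (coset_weight (coset v) == j).
Proof.
move=> le_j2; have [x0 x0_in wx0] := coset_weight_attained v.
have small_eq y : y \in coset v -> hwt y = j -> y = x0.
  move=> y_in wy; apply: (coset_small_uniq y_in x0_in); rewrite ?wy //.
  by rewrite wx0 (leq_trans (coset_weight_le y_in)) // wy.
have [wj|wNj] := eqVneq (coset_weight (coset v)) j; last first.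
  apply/eqP; rewrite cards_eq0; apply/eqP/setP => y; rewrite !inE.
  apply/negbTE/andP => -[y_in /eqP wy].
  by move: wNj; rewrite -wx0 -(small_eq y y_in wy) wy eqxx.
rewrite /B /= -(cards1 x0); apply: eq_card => y; rewrite !inE.
apply/andP/eqP => [[y_in /eqP wy]|->]; first exact: small_eq.
by rewrite x0_in wx0 wj.
Qed.

Definition supp_count (V : {set word F}) w :=
  (\sum_(T : {set option F} | #|T| == w) #|[set x in V | supp x \subset T]|)%N.

Lemma supp_count_coset v1 v2 w :
  (4 <= w)%N -> supp_count (coset v1) w = supp_count (coset v2) w.
Proof.
move=> le4w; apply: eq_bigr => T /eqP cardT.
by apply/eqP; rewrite eqn_leq !card_coset_supp_le // cardT.
Qed.

Lemma sum_weight_lt (V : {set word F}) w (f : nat -> nat) :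
  (\sum_(x in V | hwt x < w) f (hwt x) = \sum_(j < w) B j V * f j)%N.
Proof.
elim: w => [|w IHw]; first by rewrite big_ord0 big_pred0 // => x; rewrite ltn0 andbF.
rewrite big_ord_recr /= -IHw (bigID (fun x => hwt x < w)%N) /=; congr (_ + _).
  by apply: eq_bigl => x; rewrite -andbA (andb_idl (@ltnW _ _)).
rewrite -sum_nat_cond_const; apply: eq_big => x; first by rewrite ltnS -andbA -leqNgt -eqn_leq.
by rewrite ltnS -andbA -leqNgt -eqn_leq => /andP[_ /eqP ->].
Qed.

Lemma supp_count_triangular (V : {set word F}) w :
  supp_count V w = (\sum_(j < w) B j V * 'C(#|{: option F}| - j, w - j) + B w V)%N.
Proof.
rewrite /supp_count double_count; under eq_bigr do rewrite card_supersets.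
rewrite (bigID (fun x => hwt x < w.+1)%N) /= [X in (_ + X)%N]big1 ?addn0; last first.
  by move=> x /andP[_]; rewrite ltnS => /negbTE ->.
rewrite (sum_weight_lt V w.+1
  (fun j => if j <= w then 'C(#|{: option F}| - j, w - j) else 0)%N).
rewrite big_ord_recr /= leqnn subnn bin0 muln1; congr (_ + _).
by apply: eq_bigr => j _; rewrite (ltnW (ltn_ord j)).
Qed.

End Cosets.

Theorem theorem3p5 (F : finFieldType) (hq : (5 <= #|F|)%N) (v1 v2 : word F) :
  coset_weight (coset v1) = coset_weight (coset v2) ->
  B 3 (coset v1) = B 3 (coset v2) ->
  forall w : nat, B w (coset v1) = B w (coset v2).
Proof.
move=> eq_weight eq_B3 w; elim/ltn_ind: w => w IHw.
have [le_w2|lt2w] := leqP w 2; first by rewrite !B_small // eq_weight.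
have [le_w3|lt3w] := leqP w 3; first by have -> : w = 3 by apply/eqP; rewrite eqn_leq le_w3.
have := supp_count_coset v1 v2 lt3w; rewrite !supp_count_triangular.
by under eq_bigr => j _ do rewrite IHw //; move/addnI.
Qed.
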